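(* Let $t$ be a normal λ-term, $A_1,\dots,A_n\in\Omega^-$, $A\in\Omega^+$ such that $\perp$ does not appear in $A_1,\dots,A_n,A$, and let $B_1,\dots,B_m$ be $\perp$-types. If $x_1:A_1,\dots,x_n:A_n,y_1:B_1,\dots,y_m:B_m\vdash_{TTR}t:A$, then $x_1:A_1,\dots,x_n:A_n\vdash_{TTR}t:A$.
   Context: $TTR$ types: over a second-order language with first-order variables, function symbols, $n$-ary predicate variables and symbols, and a fixed system $\mathbf E$ of equations; atomic $\perp$ and $X(t_1,\dots,t_n)$; constructors $\to$, $\forall x$, $\forall X$, and $\mu Cx_1\dots x_nA\langle t_1,\dots,t_n\rangle$ for $C$ an $n$-ary predicate symbol occurring and positive in $A$. Subtyping $\subseteq$ is generated by: reflexivity; $A\subseteq A',B\subseteq B'\Rightarrow A'\to B\subseteq A\to B'$; $A[G/v]\subseteq B\Rightarrow\forall vA\subseteq B$; $A\subseteq B\Rightarrow A\subseteq\forall vB$ ($v$ not free in $A$); $A\subseteq B[v/y]\Rightarrow A\subseteq B[w/y]$ for $v=w$ an instance of an equation of $\mathbf E$; transitivity; $D[\mu C\bar xD\langle\bar z\rangle/C(\bar z)][\bar t/\bar x]\subseteq\mu C\bar xD\langle\bar t\rangle$ and its converse; $D[E/C(\bar x)]\subseteq E\Rightarrow\mu C\bar xD\langle\bar t\rangle\subseteq E[\bar t/\bar x]$. Typing $\vdash_{TTR}$: variable axiom; $\to$-intro/elim; $\forall$-intro (variable not free in context) and elimination for first- and second-order variables; equational rule; subsumption along $\subseteq$; rule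 (Y): from $\Gamma\vdash t:\forall\bar x[C(\bar x)\to E]\to\forall\bar x[D\to E]$ infer $\Gamma\vdash(Y)t:\forall\bar x[\mu C\bar xD\langle\bar x\rangle\to E]$ ($C$ not free in $E$ nor $\Gamma$; $Y$ Turing's fixed point combinator). $\Omega^+$, $\Omega^-$: atomic types in both; $T^-\to T^+\in\Omega^+$, $T^+\to T^-\in\Omega^-$ for $T^\pm\in\Omega^\pm$; $\forall xT^+,\forall XT^+\in\Omega^+$; $\forall xT^-\in\Omega^-$, and $\forall XT^-\in\Omega^-$ if $X$ not free in $T^-$; $\mu C\bar xT^+\langle\bar t\rangle\in\Omega^+$ for $C$ occurring and positive in $T^+\in\Omega^+$. $\perp$-types: $\perp$; and $B\to A$, $\forall vA$, $\mu C\bar xA\langle\bar t\rangle$ whenever $A$ is a $\perp$-type. *)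

(* Locally nameless style: all bindings in TYPES use de Bruijn
   indices; lambda-term variables are named (nat).

   Namespaces of type-level variables:
   - first-order variables: de Bruijn indices (FVar i);
   - predicate VARIABLES (bound by the second-order forall): an n-ary predicate
     variable is an index in the namespace of arity n; the arity of an atom
     PV X args is (length args).  So PV X l refers to the X-th enclosing
     All2 (length l) binder (or to a free n-ary variable);
   - predicate SYMBOLS (bound by mu, or free): likewise, PS C l, namespace of
     arity (length l), bound by Mu (length l).
   Function symbols: FApp f l is the symbol (f, length l) applied to l. *)
From Stdlib Require Import List Arith PeanoNat.
Import ListNotations.

Inductive fterm : Type :=
| FVar (i : nat)
| FApp (f : nat) (args : list fterm).

Inductive ty : Type :=
| Bot
| PV (X : nat) (args : list fterm)
| PS (C : nat) (args : list fterm)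
| Arr (A B : ty)
| All1 (A : ty)
| All2 (n : nat) (A : ty)
| Mu (n : nat) (D : ty) (ts : list fterm).
(* Mu n D ts = mu C x1..xn D <t1..tn> : binds the n-ary symbol C (index 0 of
   arity n) and the first-order variables x1..xn in D, x_i being the fo index
   n-i (x_n is index 0); ts are outside these binders. *)

Fixpoint fsub (s : nat -> fterm) (t : fterm) : fterm :=
  match t with
  | FVar i => s i
  | FApp f l => FApp f (map (fsub s) l)
  end.

Definition shiftf (k : nat) : nat -> fterm := fun j => FVar (k + j).

Definition up_f (s : nat -> fterm) : nat -> fterm :=
  fun i => match i with 0 => FVar 0 | S i' => fsub (shiftf 1) (s i') end.

Fixpoint upn_f (k : nat) (s : nat -> fterm) : nat -> fterm :=
  match k with 0 => s | S k' => up_f (upn_f k' s) end.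

(** params m = [x1; ...; xm] = [FVar (m-1); ...; FVar 0] *)
Definition params (m : nat) : list fterm := map FVar (rev (seq 0 m)).

(** inst_f m args: xi := i-th arg, other variables shifted down by m *)
Definition inst_f (m : nat) (args : list fterm) : nat -> fterm :=
  fun j => if j <? m then nth (m - 1 - j) args (FVar 0) else FVar (j - m).

(** renamings of predicate namespaces: arity -> index -> index *)
Definition idr : nat -> nat -> nat := fun _ i => i.
Definition up_p (n : nat) (z : nat -> nat -> nat) : nat -> nat -> nat :=
  fun m i => if m =? n then match i with 0 => 0 | S i' => S (z m i') end
             else z m i.
Definition shift_p (n : nat) : nat -> nat -> nat :=
  fun m i => if m =? n then S i else i.

(** fo substitution + renaming of predicate variables and symbols *)
Fixpoint tfsub (s : nat -> fterm) (zv zs : nat -> nat -> nat) (A : ty) : ty :=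
  match A with
  | Bot => Bot
  | PV X l => PV (zv (length l) X) (map (fsub s) l)
  | PS C l => PS (zs (length l) C) (map (fsub s) l)
  | Arr A B => Arr (tfsub s zv zs A) (tfsub s zv zs B)
  | All1 A => All1 (tfsub (up_f s) zv zs A)
  | All2 n A => All2 n (tfsub s (up_p n zv) zs A)
  | Mu n D ts => Mu n (tfsub (upn_f n s) zv (up_p n zs) D) (map (fsub s) ts)
  end.

(** Full simultaneous substitution.  pv m X (resp. ps m C) is the formula with
    m parameters (fo indices 0..m-1, x_i = index m-i) replacing the m-ary
    predicate variable X (resp. symbol C). *)
Definition idpv : nat -> nat -> ty := fun m X => PV X (params m).
Definition idps : nat -> nat -> ty := fun m C => PS C (params m).

Definition up1 (p : nat -> nat -> ty) : nat -> nat -> ty :=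
  fun m X => tfsub (upn_f m (shiftf 1)) idr idr (p m X).
Definition up2v (n : nat) (p : nat -> nat -> ty) : nat -> nat -> ty :=
  fun m X => if m =? n then
               match X with 0 => PV 0 (params n)
                          | S X' => tfsub FVar (shift_p n) idr (p m X') end
             else tfsub FVar (shift_p n) idr (p m X).
Definition up2o (n : nat) (p : nat -> nat -> ty) : nat -> nat -> ty :=
  fun m X => tfsub FVar (shift_p n) idr (p m X).
Definition upmu_o (n : nat) (p : nat -> nat -> ty) : nat -> nat -> ty :=
  fun m X => tfsub (upn_f m (shiftf n)) idr (shift_p n) (p m X).
Definition upmu_s (n : nat) (p : nat -> nat -> ty) : nat -> nat -> ty :=
  fun m C => if m =? n then
               match C with 0 => PS 0 (params n)
                          | S C' => tfsub (upn_f m (shiftf n)) idr (shift_p n) (p m C') end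
             else tfsub (upn_f m (shiftf n)) idr (shift_p n) (p m C).

Fixpoint tsub (s : nat -> fterm) (pv ps : nat -> nat -> ty) (A : ty) : ty :=
  match A with
  | Bot => Bot
  | PV X l => tfsub (inst_f (length l) (map (fsub s) l)) idr idr (pv (length l) X)
  | PS C l => tfsub (inst_f (length l) (map (fsub s) l)) idr idr (ps (length l) C)
  | Arr A B => Arr (tsub s pv ps A) (tsub s pv ps B)
  | All1 A => All1 (tsub (up_f s) (up1 pv) (up1 ps) A)
  | All2 n A => All2 n (tsub s (up2v n pv) (up2o n ps) A)
  | Mu n D ts => Mu n (tsub (upn_f n s) (upmu_o n pv) (upmu_s n ps) D) (map (fsub s) ts)
  end.

(* B[u/y] where y is the fo variable of index 0 *)
Definition subst1 (B : ty) (u : fterm) : ty :=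
  tsub (fun j => match j with 0 => u | S j' => FVar j' end) idpv idps B.
(* A[G/X], X the n-ary predicate variable of index 0, G with n parameters *)
Definition subst2 (n : nat) (A G : ty) : ty :=
  tsub FVar (fun m X => if m =? n then match X with 0 => G | S X' => PV X' (params m) end
                        else PV X (params m)) idps A.
(* weakenings: "v not free in A" *)
Definition lift1 (A : ty) : ty := tfsub (shiftf 1) idr idr A.
Definition liftv (n : nat) (A : ty) : ty := tfsub FVar (shift_p n) idr A.
Definition lifts (n : nat) (A : ty) : ty := tfsub FVar idr (shift_p n) A.
(* A[t1..tn / x1..xn] for A with n parameters *)
Definition instx (n : nat) (A : ty) (ts : list fterm) : ty :=
  tsub (inst_f n ts) idpv idps A.
(* D[E/C(x1..xn)] : D body of a mu (n params, symbol C = index 0 of arity n),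
   E a formula with n parameters x1..xn (living in the outer context) *)
Definition substC (n : nat) (D E : ty) : ty :=
  tsub FVar idpv
    (fun m C => if m =? n then
                  match C with 0 => tfsub (upn_f n (shiftf n)) idr idr E
                             | S C' => PS C' (params m) end
                else PS C (params m)) D.
(* D[mu C x D <z>/C(z)][t/x] *)
Definition unfold (n : nat) (D : ty) (ts : list fterm) : ty :=
  tsub (inst_f n ts) idpv
    (fun m C => if m =? n then
                  match C with 0 => Mu n (tfsub (upn_f n (shiftf n)) idr idr D) (params n)
                             | S C' => PS C' (params m) end
                else PS C (params m)) D.
Definition Alln (n : nat) (A : ty) : ty := Nat.iter n All1 A.

Fixpoint sym_occ (n k : nat) (A : ty) : Prop :=
  match A with
  | Bot | PV _ _ => False
  | PS C l => length l = n /\ C = k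
  | Arr A B => sym_occ n k A \/ sym_occ n k B
  | All1 A | All2 _ A => sym_occ n k A
  | Mu m D _ => sym_occ n (if m =? n then S k else k) D
  end.

(* occurrence of the symbol (n,k) with polarity p (true = positive) *)
Fixpoint sym_occ_pol (n k : nat) (p : bool) (A : ty) : Prop :=
  match A with
  | Bot | PV _ _ => False
  | PS C l => length l = n /\ C = k /\ p = true
  | Arr A B => sym_occ_pol n k (negb p) A \/ sym_occ_pol n k p B
  | All1 A | All2 _ A => sym_occ_pol n k p A
  | Mu m D _ => sym_occ_pol n (if m =? n then S k else k) p D
  end.

Fixpoint pv_occ (n k : nat) (A : ty) : Prop :=
  match A with
  | Bot | PS _ _ => False
  | PV X l => length l = n /\ X = k
  | Arr A B => pv_occ n k A \/ pv_occ n k B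
  | All1 A => pv_occ n k A
  | All2 m A => pv_occ n (if m =? n then S k else k) A
  | Mu _ D _ => pv_occ n k D
  end.

Fixpoint wf (A : ty) : Prop :=
  match A with
  | Bot | PV _ _ | PS _ _ => True
  | Arr A B => wf A /\ wf B
  | All1 A | All2 _ A => wf A
  | Mu n D ts => length ts = n /\ sym_occ n 0 D /\ ~ sym_occ_pol n 0 false D /\ wf D
  end.

Fixpoint no_bot (A : ty) : Prop :=
  match A with
  | Bot => False
  | PV _ _ | PS _ _ => True
  | Arr A B => no_bot A /\ no_bot B
  | All1 A | All2 _ A => no_bot A
  | Mu _ D _ => no_bot D
  end.

Inductive omp : ty -> Prop :=
| omp_bot : omp Bot
| omp_pv X l : omp (PV X l)
| omp_ps C l : omp (PS C l)
| omp_arr A B : omn A -> omp B -> omp (Arr A B)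
| omp_all1 A : omp A -> omp (All1 A)
| omp_all2 n A : omp A -> omp (All2 n A)
| omp_mu n D ts : omp D -> sym_occ n 0 D -> ~ sym_occ_pol n 0 false D -> omp (Mu n D ts)
with omn : ty -> Prop :=
| omn_bot : omn Bot
| omn_pv X l : omn (PV X l)
| omn_ps C l : omn (PS C l)
| omn_arr A B : omp A -> omn B -> omn (Arr A B)
| omn_all1 A : omn A -> omn (All1 A)
| omn_all2 n A : omn A -> ~ pv_occ n 0 A -> omn (All2 n A).

Inductive botty : ty -> Prop :=
| bt_bot : botty Bot
| bt_arr B A : botty A -> botty (Arr B A)
| bt_all1 A : botty A -> botty (All1 A)
| bt_all2 n A : botty A -> botty (All2 n A)
| bt_mu n A ts : botty A -> botty (Mu n A ts).

Definition eq_inst (E : fterm -> fterm -> Prop) (v w : fterm) : Prop :=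
  exists u1 u2 (s : nat -> fterm), E u1 u2 /\
    ((v = fsub s u1 /\ w = fsub s u2) \/ (v = fsub s u2 /\ w = fsub s u1)).

Inductive sub (E : fterm -> fterm -> Prop) : ty -> ty -> Prop :=
| sub_refl A : wf A -> sub E A A
| sub_arr A A' B B' : wf (Arr A' B) -> wf (Arr A B') ->
    sub E A A' -> sub E B B' -> sub E (Arr A' B) (Arr A B')
| sub_all1_l A u B : wf (All1 A) -> wf B ->
    sub E (subst1 A u) B -> sub E (All1 A) B
| sub_all2_l n A G B : wf (All2 n A) -> wf G -> wf B ->
    sub E (subst2 n A G) B -> sub E (All2 n A) B
| sub_all1_r A B : wf A -> wf (All1 B) ->
    sub E (lift1 A) B -> sub E A (All1 B)
| sub_all2_r n A B : wf A -> wf (All2 n B) ->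
    sub E (liftv n A) B -> sub E A (All2 n B)
| sub_eq A B v w : wf A -> wf (subst1 B w) -> eq_inst E v w ->
    sub E A (subst1 B v) -> sub E A (subst1 B w)
| sub_trans A B C : wf A -> wf C -> sub E A B -> sub E B C -> sub E A C
| sub_fold n D ts : wf (Mu n D ts) -> wf (unfold n D ts) ->
    sub E (unfold n D ts) (Mu n D ts)
| sub_unfold n D ts : wf (Mu n D ts) -> wf (unfold n D ts) ->
    sub E (Mu n D ts) (unfold n D ts)
| sub_mu_ind n D Ex ts : wf (Mu n D ts) -> wf Ex -> wf (instx n Ex ts) ->
    sub E (substC n D Ex) Ex -> sub E (Mu n D ts) (instx n Ex ts).

Inductive lterm : Type :=
| Var (x : nat)
| Lam (x : nat) (t : lterm)
| App (t u : lterm).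

Fixpoint normal (t : lterm) : Prop :=
  match t with
  | Var _ => True
  | Lam _ t => normal t
  | App t u => normal t /\ normal u /\ (match t with Lam _ _ => False | _ => True end)
  end.

(* Turing's fixed point combinator (lambda x y. y (x x y)) (lambda x y. y (x x y)) *)
Definition Theta0 : lterm :=
  Lam 0 (Lam 1 (App (Var 1) (App (App (Var 0) (Var 0)) (Var 1)))).
Definition Yc : lterm := App Theta0 Theta0.

Definition ctx := list (nat * ty).
Fixpoint lookup (x : nat) (G : ctx) : option ty :=
  match G with
  | [] => None
  | (y, A) :: G' => if x =? y then Some A else lookup x G'
  end.

Inductive typing (E : fterm -> fterm -> Prop) : ctx -> lterm -> ty -> Prop :=
| ty_var G x A : wf A -> lookup x G = Some A -> typing E G (Var x) A
| ty_lam G x t A B : wf (Arr A B) ->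
    typing E ((x, A) :: G) t B -> typing E G (Lam x t) (Arr A B)
| ty_app G t u A B : wf B ->
    typing E G t (Arr A B) -> typing E G u A -> typing E G (App t u) B
| ty_all1_i G t A : wf (All1 A) ->
    typing E (map (fun p => (fst p, lift1 (snd p))) G) t A -> typing E G t (All1 A)
| ty_all2_i G t n A : wf (All2 n A) ->
    typing E (map (fun p => (fst p, liftv n (snd p))) G) t A -> typing E G t (All2 n A)
| ty_all1_e G t A u : wf (subst1 A u) ->
    typing E G t (All1 A) -> typing E G t (subst1 A u)
| ty_all2_e G t n A Gf : wf Gf -> wf (subst2 n A Gf) ->
    typing E G t (All2 n A) -> typing E G t (subst2 n A Gf)
| ty_eq G t A v w : wf (subst1 A w) -> eq_inst E v w ->
    typing E G t (subst1 A v) -> typing E G t (subst1 A w)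
| ty_sub G t A B : wf B -> typing E G t A -> sub E A B -> typing E G t B
| ty_Y G t n D Ex : wf (Alln n (Arr (Mu n (tfsub (upn_f n (shiftf n)) idr idr D) (params n)) Ex)) ->
    typing E (map (fun p => (fst p, lifts n (snd p))) G) t
      (Arr (Alln n (Arr (PS 0 (params n)) (lifts n Ex))) (Alln n (Arr D (lifts n Ex)))) ->
    typing E G (App Yc t)
      (Alln n (Arr (Mu n (tfsub (upn_f n (shiftf n)) idr idr D) (params n)) Ex)).

(* Call a type exposed at polarity p when bottom can surface at polarity p in it or in
   anything it can be instantiated, unfolded or subtyped into: bottom itself positively,
   and negatively a mu-type or a second-order forall X whose X occurs (X may become
   bottom).  Types of Omega+ without bottom are not positively exposed, types of Omega-
   not negatively, and subtyping and the elimination rules never create exposure.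
   Marking the bottom-typed hypotheses, induction on the derivation of a normal term
   shows: a neutral term with a marked head has a bottom-type; one with an unmarked head
   uses no marked variable and has a type that is not negatively exposed and mentions no
   predicate variable absent from the head's type (so second-order forall-introduction
   keeps it unexposed); a term whose type is not positively exposed uses no marked
   variable.  So the bottom-typed hypotheses can be dropped. *)
From Stdlib Require Import List PeanoNat Bool.

(** * Exposure under renaming and substitution *)

Fixpoint exposed (b : bool) (A : ty) : Prop :=
  match A with
  | Bot => b = true
  | PV _ _ | PS _ _ => False
  | Arr A B => exposed (negb b) A \/ exposed b B
  | All1 A => exposed b A
  | All2 n A => exposed b A \/ (b = false /\ pv_occ n 0 A)
  | Mu n D _ => exposed b D \/ b = false
  end.

Lemma botty_exposed T : botty T -> exposed true T.
Proof. induction 1; simpl; auto. Qed.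

Lemma omega_not_exposed A :
  (omp A -> no_bot A -> ~ exposed true A) /\ (omn A -> no_bot A -> ~ exposed false A).
Proof.
  induction A as [| | |A1 IH1 A2 IH2|A IH|n A IH|n D IH ts]; split; intros Hom Hnb;
    inversion Hom; subst; simpl in Hnb |- *; try tauto.
  - intros [H|[? _]]; [eapply (proj1 IH); eauto|discriminate].
  - intros [H|?]; [eapply (proj1 IH); eauto|discriminate].
Qed.

Lemma length_params n : length (params n) = n.
Proof. unfold params. now rewrite length_map, length_rev, length_seq. Qed.

Lemma pv_occ_params m' k m j : pv_occ m j (PV k (params m')) <-> m = m' /\ j = k.
Proof. simpl. rewrite length_params. split; intros [-> ->]; auto. Qed.

Lemma up_p_same n z k : up_p n z n k = match k with 0 => 0 | S k' => S (z n k') end.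
Proof. unfold up_p. now rewrite Nat.eqb_refl. Qed.

Lemma pv_occ_tfsub : forall A s zv zs m j,
  pv_occ m j (tfsub s zv zs A) <-> exists k, zv m k = j /\ pv_occ m k A.
Proof.
  induction A; intros s zv zs m j; simpl.
  - firstorder.
  - rewrite length_map. split.
    + intros [<- <-]. eauto.
    + intros [k [<- [-> ->]]]. auto.
  - firstorder.
  - rewrite IHA1, IHA2. firstorder.
  - apply IHA.
  - rewrite IHA. unfold up_p.
    destruct (Nat.eqb_spec n m) as [<-|]; rewrite ?Nat.eqb_refl.
    + split.
      * intros [[|k] [Hk Hocc]]; [discriminate|]. injection Hk as <-. eauto.
      * intros [k [<- Hocc]]. now exists (S k).
    + rewrite (proj2 (Nat.eqb_neq m n)) by auto. reflexivity.
  - apply IHA.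
Qed.

Lemma pv_occ_tfsub_idr A s zs m j : pv_occ m j (tfsub s idr zs A) <-> pv_occ m j A.
Proof. rewrite pv_occ_tfsub. unfold idr. firstorder congruence. Qed.

Lemma pv_occ_tfsub_shift A s zs n m j :
  pv_occ m (if n =? m then S j else j) (tfsub s (shift_p n) zs A) <-> pv_occ m j A.
Proof.
  rewrite pv_occ_tfsub. unfold shift_p.
  destruct (Nat.eqb_spec m n) as [<-|]; rewrite ?Nat.eqb_refl.
  - firstorder congruence.
  - rewrite (proj2 (Nat.eqb_neq n m)) by auto. firstorder congruence.
Qed.

Lemma not_pv_occ_tfsub_shift0 A s zs n : ~ pv_occ n 0 (tfsub s (shift_p n) zs A).
Proof.
  rewrite pv_occ_tfsub. unfold shift_p. rewrite Nat.eqb_refl. now intros [k [? _]].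
Qed.

Lemma exposed_tfsub : forall A s zv zs b, exposed b (tfsub s zv zs A) <-> exposed b A.
Proof.
  induction A; intros s zv zs b; simpl; try tauto.
  - now rewrite IHA1, IHA2.
  - apply IHA.
  - rewrite IHA, pv_occ_tfsub. setoid_rewrite up_p_same.
    split; intros [H|[Hb H]]; auto; right; split; auto.
    + destruct H as [[|k] [Hk H]]; [exact H|discriminate].
    + now exists 0.
  - now rewrite IHA.
Qed.

Lemma botty_tfsub : forall A s zv zs, botty (tfsub s zv zs A) <-> botty A.
Proof.
  induction A; intros s zv zs; simpl; split; intros H; inversion H; subst;
    constructor; firstorder.
Qed.

Lemma pv_occ_tsub_inv : forall A s pv ps m j, pv_occ m j (tsub s pv ps A) ->
  (exists m' k, pv_occ m' k A /\ pv_occ m j (pv m' k)) \/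
  (exists m' k, sym_occ m' k A /\ pv_occ m j (ps m' k)).
Proof.
  induction A; intros s pv ps m j H; simpl in H.
  - contradiction.
  - rewrite pv_occ_tfsub_idr in H. left. exists (length args), X. simpl; auto.
  - rewrite pv_occ_tfsub_idr in H. right. exists (length args), C. simpl; auto.
  - destruct H as [H|H]; [apply IHA1 in H|apply IHA2 in H]; simpl; firstorder.
  - apply IHA in H. unfold up1 in H. setoid_rewrite pv_occ_tfsub_idr in H. exact H.
  - apply IHA in H. destruct H as [[m' [k [H1 H2]]]|[m' [k [H1 H2]]]].
    + unfold up2v in H2. destruct (Nat.eqb_spec m' n) as [->|Hm'].
      * destruct k as [|k].
        -- apply pv_occ_params in H2 as [-> Hj]. now rewrite Nat.eqb_refl in Hj.
        -- apply pv_occ_tfsub_shift in H2. left. exists n, k. simpl.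
           now rewrite Nat.eqb_refl.
      * apply pv_occ_tfsub_shift in H2. left. exists m', k. simpl.
        now rewrite (proj2 (Nat.eqb_neq n m')) by auto.
    + unfold up2o in H2. apply pv_occ_tfsub_shift in H2. right. now exists m', k.
  - apply IHA in H. destruct H as [[m' [k [H1 H2]]]|[m' [k [H1 H2]]]].
    + unfold upmu_o in H2. rewrite pv_occ_tfsub_idr in H2. left. now exists m', k.
    + unfold upmu_s in H2. right. simpl.
      destruct (Nat.eqb_spec m' n) as [->|Hm'].
      * destruct k as [|k]; [contradiction|].
        rewrite pv_occ_tfsub_idr in H2. exists n, k. now rewrite Nat.eqb_refl.
      * rewrite pv_occ_tfsub_idr in H2. exists m', k.
        now rewrite (proj2 (Nat.eqb_neq n m')) by auto.
Qed.

Lemma pv_occ_tsub : forall A s pv ps m' k m j, pv_occ m' k A -> pv_occ m j (pv m' k) ->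
  pv_occ m j (tsub s pv ps A).
Proof.
  induction A; intros s pv ps m' k m j H1 H2; simpl in H1 |- *; try contradiction.
  - destruct H1 as [<- <-]. now rewrite pv_occ_tfsub_idr.
  - destruct H1; [left; eapply IHA1|right; eapply IHA2]; eauto.
  - eapply IHA; eauto. unfold up1. now rewrite pv_occ_tfsub_idr.
  - eapply IHA; eauto. unfold up2v. destruct (Nat.eqb_spec m' n) as [->|Hm'].
    + rewrite Nat.eqb_refl. now apply pv_occ_tfsub_shift.
    + rewrite (proj2 (Nat.eqb_neq n m')) by auto. now apply pv_occ_tfsub_shift.
  - eapply IHA; eauto. unfold upmu_o. now rewrite pv_occ_tfsub_idr.
Qed.

Lemma exposed_tsub_inv : forall A s pv ps b, exposed b (tsub s pv ps A) ->
  exposed b A \/ (exists m k b', pv_occ m k A /\ exposed b' (pv m k)) \/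
  (exists m k q, sym_occ_pol m k q A /\ exposed (eqb q b) (ps m k)).
Proof.
  induction A; intros s pv ps b H; simpl in H |- *.
  - auto.
  - rewrite exposed_tfsub in H. right. left. exists (length args), X, b. auto.
  - rewrite exposed_tfsub in H. right. right. exists (length args), C, true.
    destruct b; auto.
  - destruct H as [H|H]; [apply IHA1 in H|apply IHA2 in H];
      destruct H as [H|[[m [k [b' [H1 H2]]]]|[m [k [q [H1 H2]]]]]]; auto.
    + right; left. exists m, k, b'. auto.
    + right; right. exists m, k, (negb q). rewrite negb_involutive.
      destruct q, b; auto.
    + right; left. exists m, k, b'. auto.
    + right; right. exists m, k, q. auto.
  - apply IHA in H. unfold up1 in H. setoid_rewrite exposed_tfsub in H. exact H.
  - destruct H as [H|[Hb H]].
    + apply IHA in H. destruct H as [H|[[m [k [b' [H1 H2]]]]|[m [k [q [H1 H2]]]]]]; auto.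
      * unfold up2v in H2. right; left. destruct (Nat.eqb_spec m n) as [->|Hm].
        -- destruct k as [|k]; [contradiction|]. rewrite exposed_tfsub in H2.
           exists n, k, b'. now rewrite Nat.eqb_refl.
        -- rewrite exposed_tfsub in H2. exists m, k, b'.
           now rewrite (proj2 (Nat.eqb_neq n m)) by auto.
      * unfold up2o in H2. rewrite exposed_tfsub in H2. right; right. now exists m, k, q.
    + apply pv_occ_tsub_inv in H.
      destruct H as [[m' [k [H1 H2]]]|[m' [k [H1 H2]]]].
      * unfold up2v in H2. destruct (Nat.eqb_spec m' n) as [->|Hm'].
        -- destruct k as [|k]; [now left; right|].
           exfalso. eapply not_pv_occ_tfsub_shift0; eauto.
        -- exfalso. eapply not_pv_occ_tfsub_shift0; eauto.
      * unfold up2o in H2. exfalso. eapply not_pv_occ_tfsub_shift0; eauto.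
  - destruct H as [H|H]; auto.
    apply IHA in H. destruct H as [H|[[m [k [b' [H1 H2]]]]|[m [k [q [H1 H2]]]]]]; auto.
    + unfold upmu_o in H2. rewrite exposed_tfsub in H2. right; left. now exists m, k, b'.
    + unfold upmu_s in H2. right; right. destruct (Nat.eqb_spec m n) as [->|Hm].
      * destruct k as [|k]; [contradiction|]. rewrite exposed_tfsub in H2.
        exists n, k, q. now rewrite Nat.eqb_refl.
      * rewrite exposed_tfsub in H2. exists m, k, q.
        now rewrite (proj2 (Nat.eqb_neq n m)) by auto.
Qed.

Lemma exposed_tsub : forall A s pv ps b, exposed b A -> exposed b (tsub s pv ps A).
Proof.
  induction A; intros s pv ps b H; simpl in H |- *; try tauto.
  - destruct H; [left|right]; auto.
  - auto.
  - destruct H as [H|[Hb H]]; [left; auto|right; split; auto].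
    eapply pv_occ_tsub; eauto. unfold up2v. rewrite Nat.eqb_refl.
    now apply pv_occ_params.
  - destruct H; [left|right]; auto.
Qed.

Lemma exposed_tsub_sym : forall A s pv ps m k q b,
  sym_occ_pol m k q A -> exposed (eqb q b) (ps m k) -> exposed b (tsub s pv ps A).
Proof.
  induction A; intros s pv ps m k q b H1 H2; simpl in H1 |- *; try contradiction.
  - destruct H1 as [<- [<- ->]]. rewrite exposed_tfsub. now destruct b.
  - destruct H1 as [H1|H1].
    + left. eapply IHA1; eauto. now destruct q, b.
    + right. eapply IHA2; eauto.
  - eapply IHA; eauto. unfold up1. now rewrite exposed_tfsub.
  - left. eapply IHA; eauto. unfold up2o. now rewrite exposed_tfsub.
  - left. eapply IHA; eauto. unfold upmu_s. destruct (Nat.eqb_spec m n) as [->|Hm].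
    + rewrite Nat.eqb_refl. now rewrite exposed_tfsub.
    + rewrite (proj2 (Nat.eqb_neq n m)) by auto. now rewrite exposed_tfsub.
Qed.

Lemma botty_tsub : forall A s pv ps, botty A -> botty (tsub s pv ps A).
Proof. intros A s pv ps H. revert s pv ps. induction H; constructor; auto. Qed.

Lemma botty_tsub_inv : forall A s pv ps, botty (tsub s pv ps A) ->
  botty A \/ (exists m k, botty (pv m k)) \/ (exists m k, botty (ps m k)).
Proof.
  induction A; intros s pv ps H; simpl in H.
  - left; constructor.
  - rewrite botty_tfsub in H. eauto.
  - rewrite botty_tfsub in H. eauto.
  - inversion_clear H as [|? ? HB| | |]. apply IHA2 in HB as [HB|HB]; auto.
    left; now constructor.
  - inversion_clear H as [| |? HB| |].
    apply IHA in HB as [HB|[[m [k HB]]|[m [k HB]]]]; unfold up1 in HB;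
      rewrite ?botty_tfsub in HB; eauto.
    left; now constructor.
  - inversion_clear H as [| | |? ? HB|].
    apply IHA in HB as [HB|[[m [k HB]]|[m [k HB]]]].
    + left; now constructor.
    + unfold up2v in HB. destruct (m =? n); [destruct k; [inversion HB|]|];
        rewrite botty_tfsub in HB; eauto.
    + unfold up2o in HB. rewrite botty_tfsub in HB. eauto.
  - inversion_clear H as [| | | |? ? ? HB].
    apply IHA in HB as [HB|[[m [k HB]]|[m [k HB]]]].
    + left; now constructor.
    + unfold upmu_o in HB. rewrite botty_tfsub in HB. eauto.
    + unfold upmu_s in HB. destruct (m =? n); [destruct k; [inversion HB|]|];
        rewrite botty_tfsub in HB; eauto.
Qed.

Lemma sym_occ_pol_either : forall A n k p,
  sym_occ n k A -> sym_occ_pol n k p A \/ sym_occ_pol n k (negb p) A.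
Proof.
  induction A; intros n' k p H; simpl in H |- *; try contradiction; auto.
  - destruct H as [-> ->]. destruct p; simpl; auto.
  - destruct H as [H|H].
    + destruct (IHA1 _ _ (negb p) H); rewrite ?negb_involutive in *; auto.
    + destruct (IHA2 _ _ p H); auto.
Qed.

Lemma exposed_tsub_id A s b : exposed b (tsub s idpv idps A) <-> exposed b A.
Proof.
  split; [|apply exposed_tsub].
  intro H. apply exposed_tsub_inv in H as [H|[[m [k [b' [_ H]]]]|[m [k [q [_ H]]]]]];
    auto; contradiction.
Qed.

Lemma pv_occ_tsub_id A s m j : pv_occ m j (tsub s idpv idps A) <-> pv_occ m j A.
Proof.
  split.
  - intro H. apply pv_occ_tsub_inv in H as [[m' [k [H1 H2]]]|[m' [k [_ []]]]].
    unfold idpv in H2. apply pv_occ_params in H2 as [-> ->]. exact H1.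
  - intro H. eapply pv_occ_tsub; eauto. now apply pv_occ_params.
Qed.

Lemma botty_tsub_id A s : botty (tsub s idpv idps A) <-> botty A.
Proof.
  split; [|apply botty_tsub].
  intro H. apply botty_tsub_inv in H as [H|[[m [k H]]|[m [k H]]]]; auto; inversion H.
Qed.

Lemma exposed_subst2_inv n A G b : exposed b (subst2 n A G) -> exposed b A \/ pv_occ n 0 A.
Proof.
  unfold subst2. intro H.
  apply exposed_tsub_inv in H as [H|[[m [k [b' [H1 H]]]]|[m [k [q [_ []]]]]]]; auto.
  destruct (Nat.eqb_spec m n) as [->|]; [destruct k|]; auto; contradiction.
Qed.

Lemma pv_occ_subst2 n A G m j : pv_occ m j (All2 n A) -> pv_occ m j (subst2 n A G).
Proof.
  unfold subst2. simpl. intro H. eapply pv_occ_tsub; eauto.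
  destruct (Nat.eqb_spec m n) as [->|]; rewrite ?Nat.eqb_refl in *;
    [|rewrite (proj2 (Nat.eqb_neq n m)) by auto];
    now apply pv_occ_params.
Qed.

Lemma pv_occ_subst2_inv n A G m j :
  pv_occ m j (subst2 n A G) -> pv_occ n 0 A \/ pv_occ m j (All2 n A).
Proof.
  unfold subst2. intro H. apply pv_occ_tsub_inv in H as [[m' [k [H1 H2]]]|[m' [k [_ []]]]].
  simpl. destruct (Nat.eqb_spec m' n) as [->|Hm']; [destruct k as [|k]; auto|].
  - apply pv_occ_params in H2 as [-> ->]. rewrite Nat.eqb_refl. auto.
  - apply pv_occ_params in H2 as [-> ->].
    rewrite (proj2 (Nat.eqb_neq n m')) by auto. auto.
Qed.

Lemma exposed_unfold_neg n D ts :
  sym_occ n 0 D -> ~ sym_occ_pol n 0 false D -> exposed false (unfold n D ts).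
Proof.
  intros Hocc Hpos. destruct (sym_occ_pol_either _ _ _ true Hocc) as [H|H]; [|contradiction].
  eapply exposed_tsub_sym; eauto. rewrite Nat.eqb_refl. simpl. auto.
Qed.

Lemma exposed_unfold_pos_inv n D ts :
  ~ sym_occ_pol n 0 false D -> exposed true (unfold n D ts) -> exposed true D.
Proof.
  unfold unfold. intros Hpos H.
  apply exposed_tsub_inv in H as [H|[[m [k [b' [_ []]]]]|[m [k [q [H1 H]]]]]]; auto.
  destruct (Nat.eqb_spec m n) as [->|]; [destruct k|]; try contradiction.
  destruct q; [|contradiction]. simpl in H.
  destruct H as [H|H]; [|discriminate]. now rewrite exposed_tfsub in H.
Qed.

Lemma pv_occ_unfold_inv n D ts m j : pv_occ m j (unfold n D ts) -> pv_occ m j D.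
Proof.
  unfold unfold. intro H. apply pv_occ_tsub_inv in H as [[m' [k [H1 H2]]]|[m' [k [H1 H2]]]].
  - unfold idpv in H2. apply pv_occ_params in H2 as [-> ->]. exact H1.
  - destruct (m' =? n); [destruct k|]; simpl in H2; try contradiction.
    now rewrite pv_occ_tfsub_idr in H2.
Qed.

Lemma pv_occ_unfold n D ts m j : pv_occ m j D -> pv_occ m j (unfold n D ts).
Proof. intro H. eapply pv_occ_tsub; eauto. now apply pv_occ_params. Qed.

Lemma botty_unfold_inv n D ts : botty (unfold n D ts) -> botty D.
Proof.
  unfold unfold. intro H. apply botty_tsub_inv in H as [H|[[m [k H]]|[m [k H]]]];
    auto; [inversion H|].
  destruct (m =? n); [destruct k|]; inversion_clear H as [| | | |? ? ? HD].
  now rewrite botty_tfsub in HD.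
Qed.

(** * Subtyping and the elimination rules *)

(* The fourth clause, dual to the third, serves the contravariant side of arrows. *)
Record exposure_le (A B : ty) : Prop := {
  exposure_le_pos : exposed true A -> exposed true B;
  exposure_le_neg : exposed false B -> exposed false A;
  exposure_le_occ : forall m j, pv_occ m j B -> pv_occ m j A \/ exposed false A;
  exposure_le_occ_rev : forall m j, pv_occ m j A -> pv_occ m j B \/ exposed true B;
  exposure_le_botty : botty A -> botty B
}.

Lemma exposure_le_refl A : exposure_le A A.
Proof. split; auto. Qed.

Lemma exposure_le_trans A B C : exposure_le A B -> exposure_le B C -> exposure_le A C.
Proof.
  intros [p1 n1 o1 r1 b1] [p2 n2 o2 r2 b2]. split; auto.
  - intros m j H. destruct (o2 m j H); auto.
  - intros m j H. destruct (r1 m j H); auto.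
Qed.

Lemma exposure_le_arr A A' B B' :
  exposure_le A A' -> exposure_le B B' -> exposure_le (Arr A' B) (Arr A B').
Proof.
  intros [p1 n1 o1 r1 b1] [p2 n2 o2 r2 b2]. split; simpl.
  - intros [H|H]; auto.
  - intros [H|H]; auto.
  - intros m j [H|H]; [destruct (r1 m j H)|destruct (o2 m j H)]; auto.
  - intros m j [H|H]; [destruct (o1 m j H)|destruct (r2 m j H)]; auto.
  - intro H. inversion_clear H. constructor. auto.
Qed.

Lemma exposure_le_subst1 A u : exposure_le (All1 A) (subst1 A u).
Proof.
  unfold subst1. split; simpl.
  - apply exposed_tsub.
  - now rewrite exposed_tsub_id.
  - intros m j. rewrite pv_occ_tsub_id. auto.
  - intros m j. rewrite pv_occ_tsub_id. auto.
  - intro H. inversion_clear H. now apply botty_tsub.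
Qed.

Lemma exposure_le_subst2 n A G : exposure_le (All2 n A) (subst2 n A G).
Proof.
  split; simpl.
  - intros [H|[? _]]; [apply exposed_tsub, H|discriminate].
  - intro H. apply exposed_subst2_inv in H as [H|H]; auto.
  - intros m j H. apply pv_occ_subst2_inv in H as [H|H]; auto.
  - intros m j H. left. now apply pv_occ_subst2.
  - intro H. inversion_clear H. now apply botty_tsub.
Qed.

Lemma exposure_le_subst1_eq A v w : exposure_le (subst1 A v) (subst1 A w).
Proof.
  unfold subst1. split; intros *; rewrite ?exposed_tsub_id, ?pv_occ_tsub_id,
    ?botty_tsub_id; auto.
Qed.

Lemma exposure_le_all1_r A B : exposure_le (lift1 A) B -> exposure_le A (All1 B).
Proof.
  unfold lift1. intros [p n o r b]. split; simpl.
  - intro H. apply p. now rewrite exposed_tfsub.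
  - intro H. apply n in H. now rewrite exposed_tfsub in H.
  - intros m j H. destruct (o m j H) as [h|h];
      [rewrite pv_occ_tfsub_idr in h|rewrite exposed_tfsub in h]; auto.
  - intros m j H. apply r. now rewrite pv_occ_tfsub_idr.
  - intro H. constructor. apply b. now rewrite botty_tfsub.
Qed.

Lemma exposure_le_all2_r n A B : exposure_le (liftv n A) B -> exposure_le A (All2 n B).
Proof.
  unfold liftv. intros [p ne o r b]. split; simpl.
  - intro H. left. apply p. now rewrite exposed_tfsub.
  - intros [H|[_ H]].
    + apply ne in H. now rewrite exposed_tfsub in H.
    + destruct (o _ _ H) as [h|h]; [now apply not_pv_occ_tfsub_shift0 in h|].
      now rewrite exposed_tfsub in h.
  - intros m j H. destruct (o _ _ H) as [h|h];
      [rewrite pv_occ_tfsub_shift in h|rewrite exposed_tfsub in h]; auto.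
  - intros m j H. rewrite <- (pv_occ_tfsub_shift A FVar idr n) in H.
    destruct (r _ _ H); auto.
  - intro H. constructor. apply b. now rewrite botty_tfsub.
Qed.

Lemma exposure_le_fold n D ts :
  wf (Mu n D ts) -> exposure_le (unfold n D ts) (Mu n D ts).
Proof.
  intros [_ [Hocc [Hpos _]]]. split; simpl; auto.
  - intro H. left. eapply exposed_unfold_pos_inv; eauto.
  - intros _. now apply exposed_unfold_neg.
  - intros m j H. left. now apply pv_occ_unfold.
  - intros m j H. left. eapply pv_occ_unfold_inv; eauto.
  - intro H. constructor. eapply botty_unfold_inv; eauto.
Qed.

Lemma exposure_le_unfold n D ts : exposure_le (Mu n D ts) (unfold n D ts).
Proof.
  split; simpl; auto.
  - intros [H|H]; [now apply exposed_tsub|discriminate].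
  - intros m j H. left. now apply pv_occ_unfold.
  - intro H. inversion_clear H. now apply botty_tsub.
Qed.

Lemma exposure_le_mu_ind n D Ex ts :
  exposure_le (substC n D Ex) Ex -> exposure_le (Mu n D ts) (instx n Ex ts).
Proof.
  unfold substC, instx. intros [p ne o r b]. split; simpl; auto.
  - intros [H|H]; [|discriminate]. now apply exposed_tsub, p, exposed_tsub.
  - intros m j H. destruct (r m j) as [h|h].
    + eapply pv_occ_tsub; eauto. now apply pv_occ_params.
    + left. eapply pv_occ_tsub; eauto. now apply pv_occ_params.
    + right. now apply exposed_tsub.
  - intro H. inversion_clear H. now apply botty_tsub, b, botty_tsub.
Qed.

Lemma sub_exposure_le E A B : sub E A B -> exposure_le A B.
Proof.
  induction 1.
  - apply exposure_le_refl.
  - now apply exposure_le_arr.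
  - eapply exposure_le_trans; [apply exposure_le_subst1|eauto].
  - eapply exposure_le_trans; [apply exposure_le_subst2|eauto].
  - now apply exposure_le_all1_r.
  - now apply exposure_le_all2_r.
  - eapply exposure_le_trans; [eauto|apply exposure_le_subst1_eq].
  - eapply exposure_le_trans; eauto.
  - now apply exposure_le_fold.
  - apply exposure_le_unfold.
  - now apply exposure_le_mu_ind.
Qed.

(** * The invariant of normal derivations *)

Fixpoint free (x : nat) (t : lterm) : Prop :=
  match t with
  | Var y => x = y
  | Lam y u => x <> y /\ free x u
  | App f u => free x f \/ free x u
  end.

Fixpoint neutral (t : lterm) : Prop :=
  match t with Var _ => True | App f _ => neutral f | Lam _ _ => False end.

(* only meaningful for neutral terms *)
Fixpoint head (t : lterm) : nat :=
  match t with Var x | Lam x _ => x | App f _ => head f end.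

Lemma normal_app_neutral t u : normal (App t u) -> neutral t.
Proof.
  revert u. induction t as [|x t _|t1 IH t2 _]; intros u [Ht [_ Hnl]]; simpl; auto.
  now apply (IH t2).
Qed.

Lemma lookup_map f x G :
  lookup x (map (fun p => (fst p, f (snd p))) G) = option_map f (lookup x G).
Proof. induction G as [|[y A] G IH]; simpl; auto. now destruct (x =? y). Qed.

Definition avoids (S : nat -> bool) (t : lterm) : Prop := forall z, S z = true -> ~ free z t.

Definition marks_bot (S : nat -> bool) (G : ctx) : Prop :=
  forall x T, lookup x G = Some T ->
    (S x = true -> botty T) /\ (S x = false -> ~ exposed false T).

Definition head_typed (S : nat -> bool) (G : ctx) (t : lterm) (T : ty) : Prop :=
  (S (head t) = true /\ botty T) \/
  (S (head t) = false /\ avoids S t /\ ~ exposed false T /\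
   exists H, lookup (head t) G = Some H /\ forall m k, pv_occ m k T -> pv_occ m k H).

Definition bot_invariant (S : nat -> bool) (G : ctx) (t : lterm) (T : ty) : Prop :=
  (~ exposed true T -> avoids S t) /\ (neutral t -> head_typed S G t T).

Lemma marks_bot_map S G s zv zs : marks_bot S G ->
  marks_bot S (map (fun p => (fst p, tfsub s zv zs (snd p))) G).
Proof.
  intros HS x T H. rewrite lookup_map in H.
  destruct (lookup x G) as [T0|] eqn:HT0; [|discriminate]. injection H as <-.
  rewrite botty_tfsub, exposed_tfsub. exact (HS x T0 HT0).
Qed.

Lemma bot_invariant_le S G t T T' :
  exposure_le T T' -> bot_invariant S G t T -> bot_invariant S G t T'.
Proof.
  intros [p ne o _ b] [Hav Hhd]. split.
  - intro HT'. apply Hav. intro HT. now apply HT', p.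
  - intro Hneu. destruct (Hhd Hneu) as [[h1 h2]|[h1 [h2 [h3 [H [h4 h5]]]]]]; [left; auto|].
    right. repeat split; auto. exists H. split; auto.
    intros m k hk. destruct (o m k hk); [auto|contradiction].
Qed.

Lemma bot_invariant_all1 S G t A :
  bot_invariant S (map (fun p => (fst p, lift1 (snd p))) G) t A ->
  bot_invariant S G t (All1 A).
Proof.
  intros [Hav Hhd]. split; [exact Hav|].
  intro Hneu. destruct (Hhd Hneu) as [[h1 h2]|[h1 [h2 [h3 [H [h4 h5]]]]]].
  - left. split; auto. now constructor.
  - right. repeat split; auto. rewrite lookup_map in h4.
    destruct (lookup (head t) G) as [H0|]; [|discriminate]. injection h4 as <-.
    exists H0. split; auto. intros m k hk. apply h5 in hk.
    unfold lift1 in hk. now rewrite pv_occ_tfsub_idr in hk.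
Qed.

Lemma bot_invariant_all2 S G t n A :
  bot_invariant S (map (fun p => (fst p, liftv n (snd p))) G) t A ->
  bot_invariant S G t (All2 n A).
Proof.
  intros [Hav Hhd]. split.
  - intro HA. apply Hav. intro H. apply HA. now left.
  - intro Hneu. destruct (Hhd Hneu) as [[h1 h2]|[h1 [h2 [h3 [H [h4 h5]]]]]].
    + left. split; auto. now constructor.
    + right. rewrite lookup_map in h4.
      destruct (lookup (head t) G) as [H0|]; [|discriminate]. injection h4 as <-.
      unfold liftv in h5. repeat split; auto.
      * intros [hb|[_ hb]]; [auto|]. apply h5 in hb. now apply not_pv_occ_tfsub_shift0 in hb.
      * exists H0. split; auto. intros m k hk. apply h5 in hk.
        now apply pv_occ_tfsub_shift in hk.
Qed.

Lemma bot_invariant_var S G x A : marks_bot S G -> lookup x G = Some A ->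
  bot_invariant S G (Var x) A.
Proof.
  intros HS Hx. destruct (HS x A Hx) as [Hbot Hgood].
  destruct (S x) eqn:HSx; split; simpl; intros Hx'.
  - contradiction (Hx' (botty_exposed _ (Hbot eq_refl))).
  - left. split; [exact HSx|auto].
  - intros z Hz ->. congruence.
  - right. repeat split; auto.
    + intros z Hz ->. congruence.
    + exists A. auto.
Qed.

Lemma bot_invariant_lam S G x t A B :
  (forall S', marks_bot S' ((x, A) :: G) -> bot_invariant S' ((x, A) :: G) t B) ->
  marks_bot S G -> bot_invariant S G (Lam x t) (Arr A B).
Proof.
  intros IH HS. split; [|contradiction].
  intros HAB z Hz [Hzx Hf].
  (* unmark the bound [x]: [A] is not negatively exposed, as [Arr A B] is not positively *)
  set (S' := fun y => S y && negb (y =? x)).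
  assert (HS' : marks_bot S' ((x, A) :: G)).
  { intros y T Hy. simpl in Hy. unfold S'. destruct (Nat.eqb_spec y x) as [->|].
    - injection Hy as <-. rewrite andb_false_r. split; [discriminate|].
      intros _ HA. apply HAB. now left.
    - rewrite andb_true_r. now apply HS. }
  apply (proj1 (IH S' HS')) with z; auto.
  - intro HB. apply HAB. now right.
  - unfold S'. rewrite Hz. now rewrite (proj2 (Nat.eqb_neq z x)).
Qed.

Lemma bot_invariant_app S G t u A B : neutral t ->
  bot_invariant S G t (Arr A B) -> bot_invariant S G u A -> bot_invariant S G (App t u) B.
Proof.
  intros Hneu [_ Ht] [Hu _].
  destruct (Ht Hneu) as [[h1 h2]|[h1 [h2 [h3 [H [h4 h5]]]]]].
  - inversion_clear h2 as [|? ? HB| | |]. split.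
    + intro HnB. contradiction (HnB (botty_exposed _ HB)).
    + intros _. left. now split.
  - assert (Havoid : avoids S (App t u)).
    { intros z Hz [Hf|Hf]; [now apply (h2 z)|].
      apply (Hu (fun HA => h3 (or_introl HA)) z Hz Hf). }
    split; [auto|]. intros _. right. repeat split; auto.
    + intro HB. apply h3. now right.
    + exists H. split; auto. intros m k hk. apply h5. now right.
Qed.

Lemma typing_bot_invariant E G t T : typing E G t T -> normal t ->
  forall S, marks_bot S G -> bot_invariant S G t T.
Proof.
  induction 1; intros Hn S HS.
  - now apply bot_invariant_var.
  - apply bot_invariant_lam; auto.
  - apply bot_invariant_app with A; auto.
    + exact (normal_app_neutral _ _ Hn).
    + apply IHtyping1; [apply Hn|auto].
    + apply IHtyping2; [apply Hn|auto].
  - apply bot_invariant_all1, IHtyping; auto. now apply marks_bot_map.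
  - apply bot_invariant_all2, IHtyping; auto. now apply marks_bot_map.
  - eapply bot_invariant_le; [apply exposure_le_subst1|auto].
  - eapply bot_invariant_le; [apply exposure_le_subst2|auto].
  - eapply bot_invariant_le; [apply exposure_le_subst1_eq|auto].
  - eapply bot_invariant_le; [eapply sub_exposure_le; eauto|auto].
  - destruct Hn as [[_ [_ []]] _].
Qed.

(** * Dropping the bottom-typed hypotheses *)

Lemma typing_strengthen E G t T : typing E G t T -> forall G',
  (forall x, free x t -> lookup x G' = lookup x G) -> typing E G' t T.
Proof.
  induction 1; intros G' HG; simpl in HG.
  - apply ty_var; auto. now rewrite HG.
  - apply ty_lam; auto. apply IHtyping. intros z Hz. simpl.
    destruct (Nat.eqb_spec z x); auto.
  - eapply ty_app; eauto.
  - apply ty_all1_i; auto. apply IHtyping. intros z Hz. now rewrite !lookup_map, HG.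
  - apply ty_all2_i; auto. apply IHtyping. intros z Hz. now rewrite !lookup_map, HG.
  - apply ty_all1_e; auto.
  - apply ty_all2_e; auto.
  - eapply ty_eq; eauto.
  - eapply ty_sub; eauto.
  - apply ty_Y; auto. apply IHtyping. intros z Hz. rewrite !lookup_map, HG; auto.
Qed.

Definition mem_names (G : ctx) (x : nat) : bool := existsb (Nat.eqb x) (map fst G).

Lemma mem_names_spec G x : mem_names G x = true <-> In x (map fst G).
Proof.
  unfold mem_names. rewrite existsb_exists. split.
  - intros [y [Hy Hxy]]. now apply Nat.eqb_eq in Hxy as ->.
  - intro H. exists x. now rewrite Nat.eqb_refl.
Qed.

Lemma lookup_In x G T : lookup x G = Some T -> In (x, T) G.
Proof.
  induction G as [|[y A] G IH]; simpl; [discriminate|].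
  destruct (Nat.eqb_spec x y) as [->|]; [intros [= ->]|]; auto.
Qed.

Lemma lookup_app x G1 G2 :
  lookup x (G1 ++ G2) = match lookup x G1 with Some T => Some T | None => lookup x G2 end.
Proof. induction G1 as [|[y A] G IH]; simpl; auto. now destruct (x =? y). Qed.

Lemma lookup_not_in x G : ~ In x (map fst G) -> lookup x G = None.
Proof.
  induction G as [|[y A] G IH]; simpl; auto. intro H.
  destruct (Nat.eqb_spec x y); [subst; tauto|]. apply IH. tauto.
Qed.

Lemma NoDup_app_not_in {X} (l1 l2 : list X) x : NoDup (l1 ++ l2) -> In x l1 -> ~ In x l2.
Proof.
  induction l1 as [|y l1 IH]; simpl; [tauto|].
  intros Hnd [->|Hx] Hx2; inversion_clear Hnd as [|? ? Hy Hnd'].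
  - apply Hy, in_or_app. auto.
  - exact (IH Hnd' Hx Hx2).
Qed.

Lemma marks_bot_app xs ys :
  Forall (fun p => omn (snd p) /\ no_bot (snd p)) xs ->
  Forall (fun p => botty (snd p)) ys ->
  NoDup (map fst (xs ++ ys)) ->
  marks_bot (mem_names ys) (xs ++ ys).
Proof.
  rewrite !Forall_forall, map_app. intros Hxs Hys Hnd x T Hx. rewrite lookup_app in Hx.
  destruct (lookup x xs) as [T'|] eqn:Hxs_x.
  - injection Hx as <-. apply lookup_In in Hxs_x. split.
    + intro Hy. apply mem_names_spec in Hy. exfalso.
      refine (NoDup_app_not_in _ _ _ Hnd _ Hy). exact (in_map fst _ _ Hxs_x).
    + intros _. apply (proj2 (omega_not_exposed T')); apply (Hxs _ Hxs_x).
  - split.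
    + intros _. apply (Hys _ (lookup_In _ _ _ Hx)).
    + intro Hy. exfalso. apply lookup_In, (in_map fst), mem_names_spec in Hx.
      simpl in Hx. congruence.
Qed.

Lemma lookup_app_not_in x G1 G2 : ~ In x (map fst G2) -> lookup x (G1 ++ G2) = lookup x G1.
Proof.
  intro H. rewrite lookup_app, (lookup_not_in x G2 H). now destruct (lookup x G1).
Qed.

Theorem lemma6p2 (E : fterm -> fterm -> Prop) (t : lterm)
  (xs ys : list (nat * ty)) (A : ty) :
  normal t ->
  Forall (fun p => omn (snd p) /\ no_bot (snd p) /\ wf (snd p)) xs ->
  omp A -> no_bot A -> wf A ->
  Forall (fun p => botty (snd p) /\ wf (snd p)) ys ->
  NoDup (map fst (xs ++ ys)) ->
  typing E (xs ++ ys) t A ->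
  typing E xs t A.
Proof.
  intros Hn Hxs Hp Hnb _ Hys Hnd Ht.
  assert (Hmarks : marks_bot (mem_names ys) (xs ++ ys)).
  { apply marks_bot_app; auto.
    - eapply Forall_impl; [|exact Hxs]. simpl. tauto.
    - eapply Forall_impl; [|exact Hys]. simpl. tauto. }
  assert (Havoid : avoids (mem_names ys) t).
  { apply (typing_bot_invariant E _ _ _ Ht Hn _ Hmarks).
    now apply omega_not_exposed. }
  apply (typing_strengthen E _ _ _ Ht). intros x Hx.
  symmetry. apply lookup_app_not_in. rewrite <- mem_names_spec.
  intro Hy. exact (Havoid x Hy Hx).
Qed.
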